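(* Let $R$ be a hyperring such that $X=\operatorname{Spec}R$ is irreducible, and let $S$, $K$, $\mathcal{F}_X$ be as in the context. Then for every $f\in S$ there is a canonical injective strict homomorphism of hyperrings $R_f\to\mathcal{F}_X(D(f))$, $\frac{a}{f^n}\mapsto\frac{a}{f^n}$; in particular (taking $f=1$) $R$ is a sub-hyperring of $\mathcal{F}_X(X)$ via $a\mapsto\frac a1$. Furthermore, if $R$ has a unique maximal hyperideal, then $R\cong\mathcal{F}_X(X)$.
   Context: Hyperring: a set with a hyperoperation $+:R\times R\to\mathcal{P}^*(R)$ (nonempty subsets; extended to subsets by $A+B=\bigcup a+b$) making $(R,+,0)$ a canonical hypergroup (commutative, associative, unique $0$ with $0+x=\{x\}$, unique $-x$ with $0\in x+(-x)$, and $x\in y+z\iff z\in x+(-y)$), and a commutative monoid $(R,\cdot,1)$, with $x(y+z)=xy+xz$, $0x=0$, $0\neq1$. Homomorphisms satisfy $\varphi(a+b)\subseteq\varphi(a)+\varphi(b)$, $\varphi(ab)=\varphi(a)\varphi(b)$; strict means equality for sums. Hyperideals: nonempty $I$ with $a-rb\subseteq I$ for $a,b\in I$, $r\in R$; prime/maximal as usual; $\operatorname{Spec}R$ has the Zariski topology, $D(f)=\{\mathfrak{p}\mid f\notin\mathfrak{p}\}$. $S$ is the set of non-zero-divisors of $R$; for a multiplicative submonoid $T$, $T^{-1}R$ is $R\times T$ modulo $(r_1,t_1)\sim(r_2,t_2)\iff xr_1t_2=xr_2t_1$ for some $x\in T$, with $\frac{r_1}{t_1}+\frac{r_2}{t_2}=\{\frac{y}{t_1t_2}\mid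 y\in r_1t_2+t_1r_2\}$ and componentwise multiplication; $K=S^{-1}R$, $R_f=\{1,f,f^2,\dots\}^{-1}R$. For open $U\subseteq X$, $\mathcal{F}_X(U)=\{u\in K\mid\forall\mathfrak{p}\in U,\ u=\frac ab\text{ with }a\in R,\ b\in S\setminus\mathfrak{p}\}$, a sub-hyperring of $K$. *)

From Stdlib Require Import Classical ClassicalEpsilon FunctionalExtensionality PropExtensionality.

Set Implicit Arguments.
Unset Strict Implicit.

(* A hyperring.  [hadd x y z] means  z ∈ x + y. *)
Record HyperRing := {
  hr :> Type;
  hadd : hr -> hr -> hr -> Prop;
  hzero : hr;
  hone : hr;
  hmul : hr -> hr -> hr;
  hneg : hr -> hr;
  hadd_nonempty : forall x y, exists z, hadd x y z;
  hadd_comm : forall x y z, hadd x y z <-> hadd y x z;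
  hadd_assoc : forall x y z w,
      (exists u, hadd x y u /\ hadd u z w) <-> (exists v, hadd y z v /\ hadd x v w);
  hadd_0l : forall x z, hadd hzero x z <-> z = x;
  hadd_neg : forall x, hadd x (hneg x) hzero;
  hneg_unique : forall x y, hadd x y hzero -> y = hneg x;
  hadd_rev : forall x y z, hadd y z x <-> hadd x (hneg y) z;
  hmul_assoc : forall x y z, hmul x (hmul y z) = hmul (hmul x y) z;
  hmul_comm : forall x y, hmul x y = hmul y x;
  hmul_1l : forall x, hmul hone x = x;
  hmul_distr : forall x y z w,
      (exists u, hadd y z u /\ w = hmul x u) <-> hadd (hmul x y) (hmul x z) w;
  hmul_0l : forall x, hmul hzero x = hzero;
  hzero_neq_one : hzero <> hone
}.

Arguments hadd {h} _ _ _.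
Arguments hzero {h}.
Arguments hone {h}.
Arguments hmul {h} _ _.
Arguments hneg {h} _.

Fixpoint hpow (R : HyperRing) (x : R) (n : nat) : R :=
  match n with O => hone | S m => hmul x (hpow x m) end.

Definition hyperideal (R : HyperRing) (I : R -> Prop) : Prop :=
  (exists a, I a) /\
  forall a b r z, I a -> I b -> hadd a (hneg (hmul r b)) z -> I z.

Definition prime_hyperideal (R : HyperRing) (P : R -> Prop) : Prop :=
  hyperideal P /\ (exists x, ~ P x) /\
  forall a b, P (hmul a b) -> P a \/ P b.

Definition maximal_hyperideal (R : HyperRing) (M : R -> Prop) : Prop :=
  hyperideal M /\ (exists x, ~ M x) /\
  forall J : R -> Prop, hyperideal J -> (forall x, M x -> J x) ->
     (forall x, J x <-> M x) \/ (forall x, J x).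

Definition unique_maximal (R : HyperRing) : Prop :=
  exists M : R -> Prop, maximal_hyperideal M /\
    forall M' : R -> Prop, maximal_hyperideal M' -> forall x, M' x <-> M x.

Definition Spec (R : HyperRing) := { P : R -> Prop | prime_hyperideal P }.

(* open sets: complements of V(E) = { p | E ⊆ p } *)
Definition zariski_open (R : HyperRing) (U : Spec R -> Prop) : Prop :=
  exists E : R -> Prop, forall p : Spec R, U p <-> exists e, E e /\ ~ proj1_sig p e.

Definition Dopen (R : HyperRing) (f : R) : Spec R -> Prop :=
  fun p => ~ proj1_sig p f.

Definition Spec_irreducible (R : HyperRing) : Prop :=
  (exists p : Spec R, True) /\
  forall U V : Spec R -> Prop, zariski_open U -> zariski_open V ->
    (exists p, U p) -> (exists p, V p) -> exists p, U p /\ V p.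

Record MulSub (R : HyperRing) := {
  msub : R -> Prop;
  msub1 : msub hone;
  msubM : forall x y, msub x -> msub y -> msub (hmul x y)
}.

Definition nzd (R : HyperRing) (x : R) : Prop :=
  forall y, hmul x y = hzero -> y = hzero.

Lemma nzd1 (R : HyperRing) : nzd (@hone R).
Proof. intros y H. now rewrite hmul_1l in H. Qed.

Lemma nzdM (R : HyperRing) (x y : R) : nzd x -> nzd y -> nzd (hmul x y).
Proof. intros Hx Hy z H. apply Hy, Hx. now rewrite hmul_assoc. Qed.

Definition Ssub (R : HyperRing) : MulSub R := Build_MulSub (@nzd1 R) (@nzdM R).

Definition powers (R : HyperRing) (f : R) : R -> Prop :=
  fun t => exists n, t = hpow f n.

Lemma hpow_add (R : HyperRing) (f : R) m n :
  hmul (hpow f m) (hpow f n) = hpow f (m + n).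
Proof.
  induction m as [|m IH]; simpl; [apply hmul_1l|].
  now rewrite <- hmul_assoc, IH.
Qed.

Lemma powers1 (R : HyperRing) (f : R) : powers f hone.
Proof. now exists 0. Qed.

Lemma powersM (R : HyperRing) (f : R) x y :
  powers f x -> powers f y -> powers f (hmul x y).
Proof. intros [m ->] [n ->]. exists (m + n). apply hpow_add. Qed.

Definition Powsub (R : HyperRing) (f : R) : MulSub R :=
  Build_MulSub (powers1 f) (@powersM R f).

(* class of the fraction p.1/p.2 : the set of pairs q equivalent to p *)
Definition cls (R : HyperRing) (T : MulSub R) (p : R * R) : R * R -> Prop :=
  fun q => msub T (snd q) /\
    exists x, msub T x /\
      hmul x (hmul (fst p) (snd q)) = hmul x (hmul (fst q) (snd p)).

(* T^{-1} R as the type of equivalence classes *)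
Definition loc (R : HyperRing) (T : MulSub R) : Type :=
  { C : R * R -> Prop | exists p, msub T (snd p) /\ C = cls T p }.

(* (a,t) is a representative of the class c, i.e. c = a/t *)
Definition in_class (R : HyperRing) (T : MulSub R) (c : loc T) (p : R * R) : Prop :=
  proj1_sig c p.

Definition mkfrac (R : HyperRing) (T : MulSub R) (p : R * R) (H : msub T (snd p))
  : loc T := exist _ (cls T p) (ex_intro _ p (conj H eq_refl)).

Definition rep (R : HyperRing) (T : MulSub R) (c : loc T) : { p : R * R |
    msub T (snd p) /\ proj1_sig c = cls T p } :=
  constructive_indefinite_description _ (proj2_sig c).

Definition loc_add (R : HyperRing) (T : MulSub R) (c1 c2 c : loc T) : Prop :=
  exists p1 p2 y, in_class c1 p1 /\ in_class c2 p2 /\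
    hadd (hmul (fst p1) (snd p2)) (hmul (snd p1) (fst p2)) y /\
    in_class c (y, hmul (snd p1) (snd p2)).

Definition loc_mul (R : HyperRing) (T : MulSub R) (c1 c2 : loc T) : loc T :=
  let (p1, H1) := rep c1 in
  let (p2, H2) := rep c2 in
  @mkfrac R T (hmul (fst p1) (fst p2), hmul (snd p1) (snd p2))
      (msubM (proj1 H1) (proj1 H2)).

Definition K (R : HyperRing) := loc (Ssub R).
Definition Rf (R : HyperRing) (f : R) := loc (Powsub f).

Definition Fsec (R : HyperRing) (U : Spec R -> Prop) (u : K R) : Prop :=
  forall p : Spec R, U p ->
    exists a b, nzd b /\ ~ proj1_sig p b /\ in_class u (a, b).

Definition strict_hom (A B : Type) (addA : A -> A -> A -> Prop) (mulA : A -> A -> A)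
  (addB : B -> B -> B -> Prop) (mulB : B -> B -> B) (phi : A -> B) : Prop :=
  (forall x y w, (exists z, addA x y z /\ w = phi z) <-> addB (phi x) (phi y) w) /\
  (forall x y, phi (mulA x y) = mulB (phi x) (phi y)).

Definition injective (A B : Type) (phi : A -> B) : Prop :=
  forall x y, phi x = phi y -> x = y.

(* All the maps are "take the same fraction in a bigger localization":
   [a/t |-> a/t] from T^-1 R to S^-1 R for a multiplicative set T of
   non-zero-divisors, and [a |-> a/1].  Because every denominator is a
   non-zero-divisor, two fractions are equal exactly when their
   cross-products are, so hyperaddition of fractions does not depend on the
   chosen representatives; this makes the maps injective strict homomorphisms.
   For the global sections, if [u = c/t] lies in F_X(X), the ideal of those
   [r] with [r c] in [t R] is contained in no maximal ideal [m]: writing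
   [u = a/b] with [b] outside [m] gives [b c = a t].  Hence it contains [1],
   i.e. [u] lies in [R]. *)

From Stdlib Require Import Classical FunctionalExtensionality
  PropExtensionality ProofIrrelevance List Permutation Mergesort.
From mathcomp Require classical_sets.
Import ListNotations.

Set Implicit Arguments.
Unset Strict Implicit.
Set Bullet Behavior "Strict Subproofs".

Section Multiplication.

Variable R : HyperRing.

Lemma hmul_1r (x : R) : hmul x hone = x.
Proof. rewrite hmul_comm. apply hmul_1l. Qed.

Lemma hmul_0r (x : R) : hmul x hzero = hzero.
Proof. rewrite hmul_comm. apply hmul_0l. Qed.

Lemma hmulCA (x y z : R) : hmul x (hmul y z) = hmul y (hmul x z).
Proof. rewrite !hmul_assoc, (hmul_comm x y). reflexivity. Qed.

End Multiplication.

(* A reflexive decision procedure for equalities in the commutative monoid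
   [(R, hmul, hone)]: both sides are flattened to lists of atoms and sorted. *)
Inductive mterm := MAtom (n : nat) | MOne | MMul (a b : mterm).

Fixpoint mterm_eval (R : HyperRing) (env : list R) (e : mterm) : R :=
  match e with
  | MAtom n => nth n env hone
  | MOne => hone
  | MMul a b => hmul (mterm_eval env a) (mterm_eval env b)
  end.

Fixpoint mterm_atoms (e : mterm) : list nat :=
  match e with
  | MAtom n => [n]
  | MOne => []
  | MMul a b => mterm_atoms a ++ mterm_atoms b
  end.

Definition hprod (R : HyperRing) (env : list R) (l : list nat) : R :=
  fold_right (fun n acc => hmul (nth n env hone) acc) hone l.

Lemma hprod_app (R : HyperRing) env l1 l2 :
  @hprod R env (l1 ++ l2) = hmul (hprod env l1) (hprod env l2).
Proof.
  induction l1 as [|n l IH]; simpl.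
  - now rewrite hmul_1l.
  - rewrite IH. apply hmul_assoc.
Qed.

Lemma mterm_eval_atoms (R : HyperRing) env e :
  @mterm_eval R env e = hprod env (mterm_atoms e).
Proof.
  induction e; simpl.
  - now rewrite hmul_1r.
  - reflexivity.
  - now rewrite hprod_app, IHe1, IHe2.
Qed.

Lemma hprod_perm (R : HyperRing) env l1 l2 :
  Permutation l1 l2 -> @hprod R env l1 = hprod env l2.
Proof.
  induction 1; simpl; try congruence. apply hmulCA.
Qed.

Lemma mterm_eval_sort (R : HyperRing) env e1 e2 :
  NatSort.sort (mterm_atoms e1) = NatSort.sort (mterm_atoms e2) ->
  @mterm_eval R env e1 = mterm_eval env e2.
Proof.
  intro E. rewrite !mterm_eval_atoms.
  rewrite (hprod_perm env (NatSort.Permuted_sort (mterm_atoms e1))),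
          (hprod_perm env (NatSort.Permuted_sort (mterm_atoms e2))), E.
  reflexivity.
Qed.

Ltac mterm_atoms_of t l :=
  match t with
  | @hmul _ ?a ?b => let l1 := mterm_atoms_of a l in mterm_atoms_of b l1
  | @hone _ => l
  | _ => lazymatch l with
         | context [cons t _] => l
         | _ => constr:(cons t l)
         end
  end.

Ltac mterm_index x l :=
  lazymatch l with
  | cons x _ => constr:(O)
  | cons _ ?l' => let n := mterm_index x l' in constr:(S n)
  end.

Ltac mterm_reify t l :=
  match t with
  | @hmul _ ?a ?b =>
      let ea := mterm_reify a l in let eb := mterm_reify b l in constr:(MMul ea eb)
  | @hone _ => constr:(MOne)
  | _ => let n := mterm_index t l in constr:(MAtom n)
  end.

Ltac hmul_ac := cbn [fst snd];
  match goal with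
  | |- @eq (hr ?R) ?x ?y =>
    let l := mterm_atoms_of x (@nil (hr R)) in
    let l := mterm_atoms_of y l in
    let ex := mterm_reify x l in
    let ey := mterm_reify y l in
    change (@mterm_eval R l ex = @mterm_eval R l ey);
    apply mterm_eval_sort; vm_compute; reflexivity
  end.

Section HyperRingFacts.

Variable R : HyperRing.

Lemma hadd_0r (x z : R) : hadd x hzero z <-> z = x.
Proof. rewrite hadd_comm. apply hadd_0l. Qed.

Lemma hnegK (x : R) : hneg (hneg x) = x.
Proof. symmetry. apply hneg_unique, hadd_comm, hadd_neg. Qed.

Lemma hmulN (x y : R) : hmul x (hneg y) = hneg (hmul x y).
Proof.
  apply hneg_unique, hmul_distr. exists hzero. split.
  - apply hadd_neg.
  - now rewrite hmul_0r.
Qed.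

Lemma hmulNl (x y : R) : hmul (hneg x) y = hneg (hmul x y).
Proof. now rewrite hmul_comm, hmulN, hmul_comm. Qed.

Lemma hsub0_eq (u v : R) : hadd u (hneg v) hzero -> u = v.
Proof. intro H. now apply hadd_rev, hadd_0r in H. Qed.

Lemma nzd_cancel (c u v : R) : nzd c -> hmul c u = hmul c v -> u = v.
Proof.
  intros Hc E.
  assert (H : hadd (hmul c u) (hmul c (hneg v)) hzero).
  { rewrite hmulN, E. apply hadd_neg. }
  apply hmul_distr in H. destruct H as [w [Hw E0]].
  symmetry in E0. apply Hc in E0. subst w. now apply hsub0_eq.
Qed.

Lemma nzd_pow (f : R) n : nzd f -> nzd (hpow f n).
Proof. intro Hf. induction n; simpl; [apply nzd1 | now apply nzdM]. Qed.

Lemma hadd_mull (c a b y : R) : hadd a b y -> hadd (hmul c a) (hmul c b) (hmul c y).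
Proof. intro H. apply hmul_distr. eauto. Qed.

End HyperRingFacts.

Section Hyperideals.

Variable R : HyperRing.
Implicit Types I P M : R -> Prop.

Lemma hyperideal0 I : hyperideal I -> I hzero.
Proof.
  intros [[a Ha] H]. apply (H a a hone); auto. rewrite hmul_1l. apply hadd_neg.
Qed.

Lemma hyperidealM I r b : hyperideal I -> I b -> I (hmul r b).
Proof.
  intros HI Hb. apply (proj2 HI hzero b (hneg r)); [now apply hyperideal0 | exact Hb|].
  rewrite hmulNl, hnegK. now apply hadd_0l.
Qed.

Lemma hyperideal_one I : hyperideal I -> I hone -> forall x, I x.
Proof. intros HI H1 x. rewrite <- (hmul_1r x). now apply hyperidealM. Qed.

Lemma prime_not1 P : prime_hyperideal P -> ~ P hone.
Proof. intros [HI [[x Hx] _]] H1. apply Hx. now apply hyperideal_one. Qed.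

Lemma prime_pow P f n : prime_hyperideal P -> ~ P f -> ~ P (hpow f n).
Proof.
  intros HP Hf. induction n as [|n IH]; simpl.
  - now apply prime_not1.
  - intro H. destruct (proj2 (proj2 HP) _ _ H); auto.
Qed.

Lemma hyperideal_colon M b : hyperideal M -> hyperideal (fun r => M (hmul r b)).
Proof.
  intro HM. split.
  - exists hzero. rewrite hmul_0l. now apply hyperideal0.
  - intros a a' r z Ha Ha' Hz.
    apply (hadd_mull b) in Hz. rewrite hmulN in Hz.
    rewrite (hmul_comm b a), (hmul_comm b z) in Hz.
    replace (hmul b (hmul r a')) with (hmul r (hmul a' b)) in Hz by hmul_ac.
    exact (proj2 HM _ _ _ _ Ha Ha' Hz).
Qed.

Lemma maximal_prime M : maximal_hyperideal M -> prime_hyperideal M.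
Proof.
  intros [HM [HMx Hmax]]. do 2 (split; [assumption|]).
  intros a b Hab. destruct (classic (M a)) as [Ha|Ha]; [now left | right].
  destruct (Hmax _ (hyperideal_colon b HM)) as [E|E].
  - intros x Hx. rewrite hmul_comm. now apply hyperidealM.
  - exfalso. apply Ha, E, Hab.
  - specialize (E hone). now rewrite hmul_1l in E.
Qed.

Definition proper_hyperideal_above I (X : R -> Prop) : Prop :=
  hyperideal X /\ ~ X hone /\ forall x, I x -> X x.

(* The empty set is admitted so that Zorn's lemma applies to the empty chain. *)
Lemma chain_union_proper I (F : (R -> Prop) -> Prop) :
  (forall X, F X -> proper_hyperideal_above I X \/ forall x, ~ X x) ->
  (forall X Y, F X -> F Y -> (forall x, X x -> Y x) \/ (forall x, Y x -> X x)) ->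
  let U := fun x => exists2 X, F X & X x in
  proper_hyperideal_above I U \/ forall x, ~ U x.
Proof.
  intros FP Ftot U.
  destruct (classic (exists x, U x)) as [[x0 [X0 FX0 Xx0]]|Hn];
    [left | right; intros x Ux; apply Hn; eauto].
  assert (HX : forall X y, F X -> X y -> proper_hyperideal_above I X).
  { intros X y FX Xy. destruct (FP X FX) as [H|H]; [exact H | now destruct (H y)]. }
  repeat split.
  - exists x0, X0; auto.
  - intros a b r z [X FX Xa] [Y FY Yb] Hz.
    destruct (Ftot X Y FX FY) as [S|S].
    + exists Y; auto. apply (proj2 (proj1 (HX Y b FY Yb)) a b r); auto.
    + exists X; auto. apply (proj2 (proj1 (HX X a FX Xa)) a b r); auto.
  - intros [X FX X1]. exact (proj1 (proj2 (HX X hone FX X1)) X1).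
  - intros x Ix. exists X0; auto. exact (proj2 (proj2 (HX X0 x0 FX0 Xx0)) x Ix).
Qed.

Lemma exists_maximal_above I :
  hyperideal I -> ~ I hone -> exists M, maximal_hyperideal M /\ forall x, I x -> M x.
Proof.
  intros HI H1.
  set (P := fun X => proper_hyperideal_above I X \/ forall x : R, ~ X x).
  destruct (@classical_sets.Zorn_bigcup R P) as [A [PA Amax]].
  { intros F FP Ftot. exact (chain_union_proper FP Ftot). }
  assert (HA : proper_hyperideal_above I A).
  { destruct PA as [H|H]; [exact H | exfalso].
    apply (Amax I); [split | left; split; [exact HI | split; [exact H1 | auto]]].
    - intros x Ax. now destruct (H x).
    - intro S. destruct HI as [[a Ha] _]. exact (H a (S a Ha)). }
  destruct HA as [HA [HA1 HAI]].
  exists A. split; [|exact HAI]. split; [exact HA | split; [eauto|]].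
  intros J HJ AJ. destruct (classic (J hone)) as [J1|J1].
  - right. now apply hyperideal_one.
  - left. destruct (classic (forall x, J x -> A x)) as [S|S].
    + intro x; split; auto.
    + exfalso. apply (Amax J); [split; assumption|].
      left. split; [exact HJ | split; [exact J1 | auto]].
Qed.

End Hyperideals.

Section Localization.

Variables (R : HyperRing) (T : MulSub R).

Lemma cls_refl p : msub T (snd p) -> cls T p p.
Proof. intro H. split; auto. exists hone. split; [apply msub1 | reflexivity]. Qed.

Lemma cls_sym p q : msub T (snd p) -> cls T p q -> cls T q p.
Proof. intros Hp [Hq [x [Hx E]]]. split; auto. exists x. split; auto. Qed.

Lemma cls_trans p q r : cls T p q -> cls T q r -> cls T p r.
Proof.
  destruct p as [p1 p2], q as [q1 q2], r as [r1 r2]; simpl.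
  intros [Hq [x [Hx E1]]] [Hr [y [Hy E2]]]; simpl in *. split; auto.
  exists (hmul x (hmul y q2)). split; [now repeat apply msubM|].
  transitivity (hmul (hmul y r2) (hmul x (hmul p1 q2))); [hmul_ac|]. rewrite E1.
  transitivity (hmul (hmul x p2) (hmul y (hmul q1 r2))); [hmul_ac|]. rewrite E2.
  hmul_ac.
Qed.

Lemma cls_eq p q : msub T (snd p) -> cls T p q -> cls T p = cls T q.
Proof.
  intros Hp H. apply functional_extensionality. intro r.
  apply propositional_extensionality. split; intro Hr.
  - eapply cls_trans; [apply cls_sym|]; eauto.
  - eapply cls_trans; eauto.
Qed.

Lemma in_class_msub (c : loc T) q : in_class c q -> msub T (snd q).
Proof. destruct c as [C [p [Hp ->]]]. now intros [H _]. Qed.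

Lemma in_class_cls (c : loc T) p q : in_class c p -> in_class c q -> cls T p q.
Proof.
  destruct c as [C [p0 [Hp0 ->]]]. unfold in_class; simpl.
  intros H1 H2. eapply cls_trans; [apply cls_sym|]; eauto.
Qed.

Lemma in_class_trans (c : loc T) p q : in_class c p -> cls T p q -> in_class c q.
Proof.
  destruct c as [C [p0 [Hp0 ->]]]. unfold in_class; simpl. apply cls_trans.
Qed.

Lemma loc_ext (c d : loc T) q : in_class c q -> in_class d q -> c = d.
Proof.
  destruct c as [C HC], d as [D HD]. unfold in_class; simpl. intros H1 H2.
  assert (C = D) as <-.
  { destruct HC as [p0 [Hp0 ->]], HD as [p1 [Hp1 ->]].
    rewrite (cls_eq Hp0 H1). symmetry. now apply cls_eq. }
  f_equal. apply proof_irrelevance.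
Qed.

Lemma in_class_mkfrac p (H : msub T (snd p)) : in_class (mkfrac H) p.
Proof. now apply cls_refl. Qed.

Lemma in_class_rep (c : loc T) : in_class c (proj1_sig (rep c)).
Proof.
  destruct (rep c) as [p [Hp E]]; simpl. unfold in_class. rewrite E. now apply cls_refl.
Qed.

Lemma in_class_loc_mul (c1 c2 : loc T) p1 p2 :
  in_class c1 p1 -> in_class c2 p2 ->
  in_class (loc_mul c1 c2) (hmul (fst p1) (fst p2), hmul (snd p1) (snd p2)).
Proof.
  intros H1 H2. unfold loc_mul.
  pose proof (in_class_rep c1) as R1. pose proof (in_class_rep c2) as R2.
  destruct (rep c1) as [r1 [Hr1 E1]], (rep c2) as [r2 [Hr2 E2]]; simpl in *.
  pose proof (in_class_cls R1 H1) as C1. pose proof (in_class_cls R2 H2) as C2.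
  unfold in_class, mkfrac; simpl.
  destruct r1 as [a1 t1], r2 as [a2 t2], p1 as [b1 u1], p2 as [b2 u2]; simpl in *.
  destruct C1 as [Hu1 [x [Hx X1]]], C2 as [Hu2 [y [Hy X2]]]; simpl in *.
  split; [now apply msubM|].
  exists (hmul x y). split; [now apply msubM|].
  transitivity (hmul (hmul x (hmul a1 u1)) (hmul y (hmul a2 u2))); [hmul_ac|].
  rewrite X1, X2. hmul_ac.
Qed.

Lemma in_class_of_cross (c : loc T) p q :
  in_class c p -> msub T (snd q) ->
  hmul (fst p) (snd q) = hmul (fst q) (snd p) -> in_class c q.
Proof.
  intros Hp Hq E. apply (in_class_trans Hp). split; [exact Hq|].
  exists hone. split; [apply msub1 | now rewrite !hmul_1l].
Qed.

Section NonZeroDivisors.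

Hypothesis T_nzd : forall t, msub T t -> nzd t.

Lemma in_class_cross (c : loc T) p q :
  in_class c p -> in_class c q -> hmul (fst p) (snd q) = hmul (fst q) (snd p).
Proof.
  intros Hp Hq. destruct (in_class_cls Hp Hq) as [_ [x [Hx E]]].
  exact (nzd_cancel (T_nzd Hx) E).
Qed.

Lemma loc_add_reps (c1 c2 c : loc T) p1 p2 :
  loc_add c1 c2 c -> in_class c1 p1 -> in_class c2 p2 ->
  exists y, hadd (hmul (fst p1) (snd p2)) (hmul (snd p1) (fst p2)) y /\
            in_class c (y, hmul (snd p1) (snd p2)).
Proof.
  destruct p1 as [b1 u1], p2 as [b2 u2]; simpl.
  intros [[a1 t1] [[a2 t2] [y0 [H1 [H2 [Hy0 Hc]]]]]] P1 P2; simpl in *.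
  pose proof (in_class_cross H1 P1) as E1. pose proof (in_class_cross H2 P2) as E2.
  simpl in *.
  (* Scale the hypersum by [u1 u2]; cross-multiplication lets [t1 t2] factor out. *)
  apply (hadd_mull (hmul u1 u2)) in Hy0.
  replace (hmul (hmul u1 u2) (hmul a1 t2)) with (hmul (hmul t1 t2) (hmul b1 u2)) in Hy0
    by (transitivity (hmul (hmul t2 u2) (hmul a1 u1)); [rewrite E1|]; hmul_ac).
  replace (hmul (hmul u1 u2) (hmul t1 a2)) with (hmul (hmul t1 t2) (hmul u1 b2)) in Hy0
    by (transitivity (hmul (hmul t1 u1) (hmul a2 u2)); [rewrite E2|]; hmul_ac).
  apply hmul_distr in Hy0. destruct Hy0 as [y [Hy Ey]].
  exists y. split; [exact Hy|].
  apply (in_class_of_cross Hc); simpl.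
  - apply msubM; [exact (in_class_msub P1) | exact (in_class_msub P2)].
  - transitivity (hmul (hmul u1 u2) y0); [hmul_ac|]. rewrite Ey. hmul_ac.
Qed.

End NonZeroDivisors.

End Localization.

Section LocalizationMap.

Variables (R : HyperRing) (T1 T2 : MulSub R).
Hypothesis T12 : forall t, msub T1 t -> msub T2 t.
Hypothesis T2_nzd : forall t, msub T2 t -> nzd t.

Definition loc_map (c : loc T1) : loc T2 :=
  mkfrac (T12 (proj1 (proj2_sig (rep c)))).

Lemma in_class_loc_map (c : loc T1) q : in_class c q -> in_class (loc_map c) q.
Proof.
  intro H. unfold loc_map, in_class, mkfrac; simpl.
  destruct (in_class_cls (in_class_rep c) H) as [Hq [x [Hx E]]].
  split; [now apply T12|]. exists x. split; [now apply T12 | exact E].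
Qed.

Lemma loc_map_inj : injective loc_map.
Proof.
  intros x y E.
  pose proof (in_class_rep x) as Rx. pose proof (in_class_rep y) as Ry.
  pose proof (in_class_loc_map Ry) as Hy. rewrite <- E in Hy.
  apply (loc_ext (q := proj1_sig (rep y))); [|exact Ry].
  apply (in_class_of_cross Rx (in_class_msub Ry)).
  exact (in_class_cross T2_nzd (in_class_loc_map Rx) Hy).
Qed.

Lemma loc_map_strict :
  strict_hom (@loc_add R T1) (@loc_mul R T1) (@loc_add R T2) (@loc_mul R T2) loc_map.
Proof.
  split.
  - intros x y w. split.
    + intros [z [[p1 [p2 [y0 [H1 [H2 [H3 H4]]]]]] ->]].
      exists p1, p2, y0. auto using in_class_loc_map.
    + intro Hw.
      pose proof (in_class_rep x) as Rx. pose proof (in_class_rep y) as Ry.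
      destruct (loc_add_reps T2_nzd Hw (in_class_loc_map Rx) (in_class_loc_map Ry))
        as [y' [Hy' Hc]].
      assert (Hu : msub T1 (snd (y', hmul (snd (proj1_sig (rep x))) (snd (proj1_sig (rep y))))))
        by (apply msubM; apply (in_class_msub (in_class_rep _))).
      exists (mkfrac Hu). split.
      * exists (proj1_sig (rep x)), (proj1_sig (rep y)), y'.
        split; [exact Rx | split; [exact Ry | split; [exact Hy' | apply in_class_mkfrac]]].
      * apply (loc_ext Hc), in_class_loc_map, in_class_mkfrac.
  - intros x y.
    apply (loc_ext (q := (hmul (fst (proj1_sig (rep x))) (fst (proj1_sig (rep y))),
                          hmul (snd (proj1_sig (rep x))) (snd (proj1_sig (rep y)))))).
    + apply in_class_loc_map, in_class_loc_mul; apply in_class_rep.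
    + apply in_class_loc_mul; apply in_class_loc_map, in_class_rep.
Qed.

End LocalizationMap.

Section Fractions.

Variables (R : HyperRing) (T : MulSub R).
Hypothesis T_nzd : forall t, msub T t -> nzd t.

Definition frac (a : R) : loc T := @mkfrac R T (a, hone) (msub1 T).

Lemma in_class_frac a : in_class (frac a) (a, hone).
Proof. apply in_class_mkfrac. Qed.

Lemma frac_inj : injective frac.
Proof.
  intros a b E. pose proof (in_class_frac b) as Hb. rewrite <- E in Hb.
  pose proof (in_class_cross T_nzd (in_class_frac a) Hb) as Eab.
  simpl in Eab. now rewrite !hmul_1r in Eab.
Qed.

Lemma frac_strict : strict_hom (@hadd R) (@hmul R) (@loc_add R T) (@loc_mul R T) frac.
Proof.
  split.
  - intros x y w. split.
    + intros [z [Hz ->]]. exists (x, hone), (y, hone), z. cbn [fst snd].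
      rewrite hmul_1r, !hmul_1l.
      split; [|split; [|split]]; auto using in_class_frac.
    + intro Hw.
      destruct (loc_add_reps T_nzd Hw (in_class_frac x) (in_class_frac y))
        as [z [Hz Hc]]; simpl in *.
      rewrite hmul_1r, !hmul_1l in *.
      exists z. split; [exact Hz|]. apply (loc_ext Hc), in_class_frac.
  - intros x y. apply (loc_ext (q := (hmul x y, hmul hone hone))).
    + rewrite hmul_1l. apply in_class_frac.
    + apply (in_class_loc_mul (p1 := (x, hone)) (p2 := (y, hone))); apply in_class_frac.
Qed.

End Fractions.

Section Sections.

Variable R : HyperRing.

Lemma Fsec_frac (U : Spec R -> Prop) (a : R) : Fsec U (frac (Ssub R) a).
Proof.
  intros p _. exists a, hone. split; [|split].
  - apply nzd1.
  - apply prime_not1, (proj2_sig p).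
  - apply in_class_frac.
Qed.

Lemma powers_nzd (f : R) : nzd f -> forall t, msub (Powsub f) t -> nzd t.
Proof. intros Hf t [n ->]. now apply nzd_pow. Qed.

Lemma Fsec_loc_map_powers (f : R) (Hf : nzd f) (x : Rf f) :
  Fsec (Dopen f) (loc_map (T2 := Ssub R) (powers_nzd Hf) x).
Proof.
  intros p Hp. pose proof (in_class_rep x) as Rx.
  destruct (proj1_sig (rep x)) as [a t] eqn:Ex.
  destruct (in_class_msub Rx) as [n Hn]. simpl in Hn. subst t.
  exists a, (hpow f n). split; [|split].
  - now apply nzd_pow.
  - apply prime_pow; [exact (proj2_sig p) | exact Hp].
  - now apply in_class_loc_map.
Qed.

(* [r] lies in this hyperideal iff [r] times the fraction [c/t] is in [R]. *)
Definition denominator_ideal (c t : R) : R -> Prop :=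
  fun r => exists a, hmul r c = hmul a t.

Lemma hyperideal_denominator (c t : R) : hyperideal (denominator_ideal c t).
Proof.
  split.
  - exists hzero, hzero. now rewrite !hmul_0l.
  - intros a b r z [e1 E1] [e2 E2] Hz.
    apply (hadd_mull c) in Hz.
    replace (hmul c (hneg (hmul r b))) with (hmul t (hneg (hmul r e2))) in Hz.
    2:{ rewrite !hmulN. f_equal.
        transitivity (hmul r (hmul e2 t)); [|rewrite <- E2]; hmul_ac. }
    replace (hmul c a) with (hmul t e1) in Hz by (rewrite hmul_comm, <- E1; hmul_ac).
    apply hmul_distr in Hz. destruct Hz as [e [_ Ee]].
    exists e. rewrite hmul_comm, Ee. hmul_ac.
Qed.

Lemma global_section_frac (u : K R) :
  Fsec (fun _ => True) u -> exists a, frac (Ssub R) a = u.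
Proof.
  intro Hu. pose proof (in_class_rep u) as Ru.
  destruct (proj1_sig (rep u)) as [c t] eqn:Eu.
  pose proof (in_class_msub Ru) as Ht. simpl in Ht.
  destruct (classic (denominator_ideal c t hone)) as [[a Ea]|N1].
  - exists a. symmetry. apply (loc_ext Ru).
    apply (in_class_of_cross (q := (c, t)) (in_class_frac (Ssub R) a) Ht).
    simpl. rewrite hmul_1l in Ea. now rewrite Ea, hmul_1r.
  - exfalso.
    destruct (exists_maximal_above (hyperideal_denominator c t) N1) as [M [HM DM]].
    destruct (Hu (exist _ M (maximal_prime HM)) I) as [a [b [Hb [HbM Hab]]]].
    apply HbM, DM. exists a. simpl in *.
    pose proof (in_class_cross (T := Ssub R) (fun _ H => H) Ru Hab) as E. simpl in E.
    now rewrite hmul_comm, E.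
Qed.

End Sections.

Theorem proposition4p29 (R : HyperRing) :
  Spec_irreducible R ->
  (forall f : R, nzd f ->
     exists phi : Rf f -> K R,
       (forall (a : R) (n : nat) (x : Rf f),
           in_class x (a, hpow f n) -> in_class (phi x) (a, hpow f n)) /\
       injective phi /\
       strict_hom (@loc_add R (Powsub f)) (@loc_mul R (Powsub f))
                  (@loc_add R (Ssub R)) (@loc_mul R (Ssub R)) phi /\
       (forall x, Fsec (Dopen f) (phi x))) /\
  (exists iota : R -> K R,
     (forall a : R, in_class (iota a) (a, hone)) /\
     injective iota /\
     strict_hom (@hadd R) (@hmul R) (@loc_add R (Ssub R)) (@loc_mul R (Ssub R)) iota /\
     (forall a, Fsec (fun _ => True) (iota a)) /\
     (unique_maximal R ->
        forall u : K R, Fsec (fun _ => True) u -> exists a, iota a = u)).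
Proof.
  intros _. split.
  - intros f Hf. exists (loc_map (T2 := Ssub R) (powers_nzd Hf)).
    split; [|split; [|split]].
    + intros a n x. apply in_class_loc_map.
    + apply loc_map_inj. exact (fun _ H => H).
    + apply loc_map_strict. exact (fun _ H => H).
    + apply Fsec_loc_map_powers.
  - exists (frac (Ssub R)). split; [|split; [|split; [|split]]].
    + apply in_class_frac.
    + apply frac_inj. exact (fun _ H => H).
    + apply frac_strict. exact (fun _ H => H).
    + apply Fsec_frac.
    + intros _. apply global_section_frac.
Qed.
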